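(* Let $t$ be odd and let $n_1,\dots,n_j$ be nonnegative integers. Then $\mathcal{L}^{(t)}_L\big(\prod_{i=1}^{j}L^{(t)}_{n_i}(x)\big)$ equals the number of inhomogeneous coverings of $K_{n_1,n_1}\sqcup\dots\sqcup K_{n_j,n_j}$ by $t$-paths, i.e. the number of sets of pairwise vertex-disjoint $t$-paths covering all vertices of the complete bipartite graph $K_{A,B}$, where $A$ (resp. $B$) is the disjoint union of the left (resp. right) parts of $K_{n_1,n_1},\dots,K_{n_j,n_j}$, such that no path has all its vertices in a single $K_{n_i,n_i}$.
   Context: Let $t\ge1$ be odd and $k=(t+1)/2$. In a complete bipartite graph, a $t$-path is a subgraph isomorphic to a path with $t$ edges (it has $k$ vertices on each side). $L^{(t)}_n$ is the polynomial with $L^{(t)}_n(x^2)=\sum_F(-1)^{|F|}x^{\,2n-(t+1)|F|}$, the sum over all families $F$ of pairwise vertex-disjoint $t$-paths in $K_{n,n}$. Let $\mu^{(t)}_n$ be the number of coverings of all vertices of $K_{n,n}$ by pairwise vertex-disjoint $t$-paths ($\mu^{(t)}_0=1$), and let $\mathcal{L}^{(t)}_L$ be the linear functional with $\mathcal{L}^{(t)}_L(x^n)=\mu^{(t)}_n$. *)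

From HB Require Import structures.
From mathcomp Require Import all_boot all_order all_algebra.
Set Implicit Arguments. Unset Strict Implicit. Unset Printing Implicit Defensive.
Import Order.TTheory GRing.Theory Num.Theory.
Local Open Scope ring_scope.

(* k = (t+1)/2 : number of vertices on each side of a t-path *)
Definition kt (t : nat) : nat := (t.+1)./2.

Section Bip.
Variables (U V : finType).
(* A subgraph of the complete bipartite graph K_{U,V} (left part U, right
   part V) without isolated vertices is given by its edge set {set U * V}. *)
Definition lefts (P : {set U * V}) : {set U} := [set e.1 | e in P].
Definition rights (P : {set U * V}) : {set V} := [set e.2 | e in P].

(* P is (the edge set of) a path with 2k-1 edges:
   a_0 - b_0 - a_1 - b_1 - ... - a_{k-1} - b_{k-1}, with distinct vertices. *)
Definition is_tpath (k : nat) (P : {set U * V}) : bool :=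
  [exists a : {ffun 'I_k -> U}, exists b : {ffun 'I_k -> V},
    [&& injectiveb a, injectiveb b &
      P == [set e | [exists i : 'I_k, exists j : 'I_k,
              (e == (a i, b j)) && ((val i == val j) || (val i == (val j).+1)%N)]]]].

Definition is_family (k : nat) (F : {set {set U * V}}) : bool :=
  [forall P in F, is_tpath k P] &&
  [forall P in F, forall Q in F, (P != Q) ==>
     [disjoint lefts P & lefts Q] && [disjoint rights P & rights Q]].

Definition is_covering (k : nat) (F : {set {set U * V}}) : bool :=
  [&& is_family k F,
      (\bigcup_(P in F) lefts P) == [set: U] &
      (\bigcup_(P in F) rights P) == [set: V]].
End Bip.

(* L^{(t)}_n as a polynomial in y = x^2 :
   L_n(y) = sum_F (-1)^{|F|} y^{n - k|F|} *)
Definition Lpoly (t n : nat) : {poly int} :=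
  \sum_(F : {set {set 'I_n * 'I_n}} | is_family (kt t) F)
     ((-1) ^+ #|F|) *: 'X^(n - kt t * #|F|).

Definition mu (t n : nat) : nat :=
  #|[set F : {set {set 'I_n * 'I_n}} | is_covering (kt t) F]|.

Definition LL (t : nat) (p : {poly int}) : int :=
  \sum_(i < size p) p`_i * (mu t i)%:Z.

(* vertex set of one side of K_{n_1,n_1} ⊔ ... ⊔ K_{n_j,n_j} *)
Definition DU (j : nat) (n : 'I_j -> nat) : finType := {i : 'I_j & 'I_(n i)}.

Definition inhom (j : nat) (n : 'I_j -> nat) (P : {set DU n * DU n}) : bool :=
  ~~ [exists i : 'I_j,
        [forall u in lefts P, tag u == i] && [forall v in rights P, tag v == i]].

From HB Require Import structures.
From mathcomp Require Import all_boot all_order all_algebra.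
Set Implicit Arguments. Unset Strict Implicit. Unset Printing Implicit Defensive.
Import GRing.Theory Num.Theory.

(* Write k = (t+1)/2 > 0 and W for each side of the
   union.  The argument is inclusion-exclusion over the homogeneous paths.
   1. (PathFamilies, Transport) A family F of t-paths covers exactly k|F|
      vertices on each side, and the families covering exactly a pair of m-sets
      (X, Y) are counted by mu_m: transport along injections 'I_m -> X, Y.
   2. (InclusionExclusion) For any set of forbidden paths, summing (-1)^|S|
      times the number of families covering the complement of S, over the
      families S of forbidden paths, counts the coverings with no forbidden
      path: each covering C receives the alternating sum over the subsets of
      its forbidden paths.  By 1, the number of complementary families of S
      is mu_{|W| - k|S|}.
   3. (Blocks) L_{n_i} is the generating polynomial of the families inside
      block i; a tuple of such families glues into a family of homogeneous
      paths, bijectively, so prod_i L_{n_i} = sum_S (-1)^|S| X^(|W| - k|S|).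
   The theorem combines 3, the linearity of L, and 2. *)

Lemma card_uniform_bigcup (I T : finType) (F : {set I}) (phi : I -> {set T}) m :
  0 < m -> {in F, forall x, #|phi x| = m} ->
  {in F &, forall x y, x != y -> [disjoint phi x & phi y]} ->
  #|\bigcup_(x in F) phi x| = m * #|F|.
Proof.
move=> m_gt0 card_phi disj_phi.
have set0_notin : set0 \notin phi @: F.
  apply/imsetP=> -[x xF /esym/eqP]; rewrite -cards_eq0 card_phi //.
  by move/eqP=> m0; rewrite m0 in m_gt0.
have [tiF inj_phi] : trivIset (phi @: F) /\ {in F &, injective phi}.
  by apply: trivIimset set0_notin => x y xF yF yx; apply: disj_phi; rewrite // eq_sym.
rewrite mulnC -(card_in_imset inj_phi) -cover_imset.
apply: card_uniform_partition; last by apply/and3P.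
by move=> _ /imsetP[x xF ->]; apply: card_phi.
Qed.

Lemma card_bigcup_disjoint (I T : finType) (F : I -> {set T}) :
  (forall i i', i != i' -> [disjoint F i & F i']) ->
  #|\bigcup_i F i| = \sum_i #|F i|.
Proof.
move=> disjF; suff card_seq (r : seq I) : uniq r ->
    #|\bigcup_(i <- r) F i| = \sum_(i <- r) #|F i|.
  by rewrite -big_enum -[in RHS]big_enum card_seq ?enum_uniq.
elim: r => [|i r IHr] /=; first by rewrite !big_nil cards0.
case/andP => i_notin_r uniq_r; rewrite !big_cons cardsU IHr //.
suff -> : F i :&: \bigcup_(i' <- r) F i' = set0 by rewrite cards0 subn0.
apply/eqP; rewrite setI_eq0 bigcup_seq; apply: bigcup_disjoint => i' i'r.
by apply: disjF; apply: contraNneq i_notin_r => ->.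
Qed.

Lemma forall_imset (T T' : finType) (h : T -> T') (A : {set T}) (p : pred T') :
  [forall x in h @: A, p x] = [forall x in A, p (h x)].
Proof.
apply/forall_inP/forall_inP => H x Hx; first by apply: H; apply: imset_f.
by case/imsetP: Hx => y Hy ->; apply: H.
Qed.

Lemma enum_injection (T : finType) (X : {set T}) m : #|X| = m ->
  exists f : 'I_m -> T, injective f /\ f @: setT = X.
Proof.
move=> <-; exists (@enum_val T (mem X)); split; first exact: enum_val_inj.
apply/setP=> x; apply/imsetP/idP; first by case=> i _ ->; apply: enum_valP.
by move=> Hx; exists (enum_rank_in Hx x); rewrite ?enum_rankK_in.
Qed.

Section PathFamilies.
Variables (U V : finType) (k : nat).
Implicit Types (P Q : {set U * V}) (F S C : {set {set U * V}}).

Definition lcover F : {set U} := \bigcup_(P in F) lefts P.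
Definition rcover F : {set V} := \bigcup_(P in F) rights P.

Lemma is_coveringE F :
  is_covering k F = [&& is_family k F, lcover F == setT & rcover F == setT].
Proof. by []. Qed.

Definition path_of (a : 'I_k -> U) (b : 'I_k -> V) : {set U * V} :=
  [set e | [exists i : 'I_k, exists j : 'I_k,
              (e == (a i, b j)) && ((val i == val j) || (val i == (val j).+1))]].

Lemma eq_path_of a a' b b' : a =1 a' -> b =1 b' -> path_of a b = path_of a' b'.
Proof.
move=> Ea Eb; apply/setP=> e; rewrite !inE.
by apply: eq_existsb => i; apply: eq_existsb => j; rewrite Ea Eb.
Qed.

Lemma path_of_diag a b i : (a i, b i) \in path_of a b.
Proof. by rewrite inE; apply/existsP; exists i; apply/existsP; exists i; rewrite !eqxx. Qed.

Lemma lefts_path_of a b : lefts (path_of a b) = a @: setT.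
Proof.
apply/setP=> u; apply/imsetP/imsetP=> [[e] | [i _ ->]].
  by rewrite inE => /existsP[i /existsP[j /andP[/eqP -> _]]] ->; exists i.
by exists (a i, b i); rewrite ?path_of_diag.
Qed.

Lemma rights_path_of a b : rights (path_of a b) = b @: setT.
Proof.
apply/setP=> v; apply/imsetP/imsetP=> [[e] | [i _ ->]].
  by rewrite inE => /existsP[i /existsP[j /andP[/eqP -> _]]] ->; exists j.
by exists (a i, b i); rewrite ?path_of_diag.
Qed.

Lemma tpathP P : reflect (exists a : 'I_k -> U, exists b : 'I_k -> V,
   [/\ injective a, injective b & P = path_of a b]) (is_tpath k P).
Proof.
apply: (iffP idP).
  case/existsP=> a /existsP[b /and3P[/injectiveP ia /injectiveP ib /eqP ->]].
  by exists a, b.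
case=> a [b [ia ib ->]]; apply/existsP; exists (finfun a).
apply/existsP; exists (finfun b); apply/and3P; split.
- by apply/injectiveP=> x y; rewrite !ffunE => /ia.
- by apply/injectiveP=> x y; rewrite !ffunE => /ib.
- by apply/eqP; apply: eq_path_of => x; rewrite ffunE.
Qed.

Lemma card_lefts P : is_tpath k P -> #|lefts P| = k.
Proof.
by case/tpathP=> a [b [ia ib ->]]; rewrite lefts_path_of card_imset // cardsT card_ord.
Qed.

Lemma card_rights P : is_tpath k P -> #|rights P| = k.
Proof.
by case/tpathP=> a [b [ia ib ->]]; rewrite rights_path_of card_imset // cardsT card_ord.
Qed.

Lemma lefts_neq0 P : 0 < k -> is_tpath k P -> lefts P != set0.
Proof. by move=> k_gt0 tP; rewrite -cards_eq0 (card_lefts tP) -lt0n. Qed.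

Lemma mem_lefts P e : e \in P -> e.1 \in lefts P.
Proof. by move=> eP; apply/imsetP; exists e. Qed.

Lemma mem_rights P e : e \in P -> e.2 \in rights P.
Proof. by move=> eP; apply/imsetP; exists e. Qed.

Lemma is_familyP F : reflect
  ({in F, forall P, is_tpath k P} /\
   {in F &, forall P Q, P != Q ->
      [disjoint lefts P & lefts Q] /\ [disjoint rights P & rights Q]})
  (is_family k F).
Proof.
apply: (iffP andP) => [[/forall_inP tF /forall_inP dF] | [tF dF]]; split => //.
- move=> P Q PF QF nPQ; have /forall_inP/(_ Q QF) := dF P PF.
  by rewrite nPQ => /andP.
- exact/forall_inP.
apply/forall_inP => P PF; apply/forall_inP => Q QF; apply/implyP=> nPQ.
by case: (dF P Q PF QF nPQ) => -> ->.
Qed.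

Lemma family_sub S C : S \subset C -> is_family k C -> is_family k S.
Proof.
move=> /subsetP sSC /is_familyP[tC dC]; apply/is_familyP; split.
  by move=> P /sSC; apply: tC.
by move=> P Q /sSC PC /sSC QC; apply: dC.
Qed.

Lemma card_lcover F : 0 < k -> is_family k F -> #|lcover F| = k * #|F|.
Proof.
move=> k_gt0 /is_familyP[tF dF]; apply: card_uniform_bigcup => //.
- by move=> P PF; rewrite card_lefts ?tF.
- by move=> P Q PF QF nPQ; case: (dF P Q PF QF nPQ).
Qed.

Lemma card_rcover F : 0 < k -> is_family k F -> #|rcover F| = k * #|F|.
Proof.
move=> k_gt0 /is_familyP[tF dF]; apply: card_uniform_bigcup => //.
- by move=> P PF; rewrite card_rights ?tF.
- by move=> P Q PF QF nPQ; case: (dF P Q PF QF nPQ).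
Qed.

End PathFamilies.

(* Transport of path families along a pair of injections f, g, which embed
   K_{U,V} into K_{U',V'} as an induced subgraph. *)
Section Transport.
Variables (U V U' V' : finType) (k : nat) (f : U -> U') (g : V -> V').
Hypotheses (inj_f : injective f) (inj_g : injective g).
Implicit Types (P : {set U * V}) (F : {set {set U * V}}).

Definition edge_img (e : U * V) : U' * V' := (f e.1, g e.2).
Definition path_img P : {set U' * V'} := edge_img @: P.
Definition family_img F : {set {set U' * V'}} := path_img @: F.

Lemma edge_img_inj : injective edge_img.
Proof. by move=> [u1 v1] [u2 v2] [/inj_f -> /inj_g ->]. Qed.

Lemma path_img_inj : injective path_img.
Proof. exact: imset_inj edge_img_inj. Qed.

Lemma family_img_inj : injective family_img.
Proof. exact: imset_inj path_img_inj. Qed.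

Lemma lefts_img P : lefts (path_img P) = f @: lefts P.
Proof. by rewrite /lefts /path_img -!imset_comp. Qed.

Lemma rights_img P : rights (path_img P) = g @: rights P.
Proof. by rewrite /rights /path_img -!imset_comp. Qed.

Lemma path_img_of (a : 'I_k -> U) (b : 'I_k -> V) :
  path_img (path_of a b) = path_of (f \o a) (g \o b).
Proof.
apply/setP=> e'; apply/imsetP/idP.
  case=> e; rewrite inE => /existsP[i /existsP[j /andP[/eqP -> ij]]] ->.
  by rewrite inE; apply/existsP; exists i; apply/existsP; exists j; rewrite eqxx.
rewrite inE => /existsP[i /existsP[j /andP[/eqP -> ij]]].
exists (a i, b j) => //.
by rewrite inE; apply/existsP; exists i; apply/existsP; exists j; rewrite eqxx.
Qed.

(* Being a t-path is invariant under the embedding: the vertices of an image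
   path all have preimages, which form a t-path mapped onto it. *)
Lemma tpath_img P : is_tpath k (path_img P) = is_tpath k P.
Proof.
apply/idP/idP; last first.
  case/tpathP=> a [b [ia ib ->]]; apply/tpathP; exists (f \o a), (g \o b).
  by split; [exact: inj_comp | exact: inj_comp | exact: path_img_of].
case/tpathP=> a' [b' [ia' ib' EP]].
have /fin_all_exists[a Ea] : forall i, exists u, f u = a' i.
  move=> i; have : a' i \in lefts (path_img P) by rewrite EP lefts_path_of imset_f.
  by rewrite lefts_img => /imsetP[u _ ->]; exists u.
have /fin_all_exists[b Eb] : forall i, exists v, g v = b' i.
  move=> i; have : b' i \in rights (path_img P) by rewrite EP rights_path_of imset_f.
  by rewrite rights_img => /imsetP[v _ ->]; exists v.
apply/tpathP; exists a, b; split.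
- by move=> x y Exy; apply: ia'; rewrite -!Ea Exy.
- by move=> x y Exy; apply: ib'; rewrite -!Eb Exy.
- by apply: path_img_inj; rewrite EP path_img_of; apply: eq_path_of => x /=.
Qed.

Lemma disjoint_img (T T' : finType) (h : T -> T') (inj_h : injective h)
  (A B : {set T}) : [disjoint h @: A & h @: B] = [disjoint A & B].
Proof.
by rewrite -!setI_eq0 -imsetI ?imset_eq0 // => x y _ _; apply: inj_h.
Qed.

Lemma family_imgE F : is_family k (family_img F) = is_family k F.
Proof.
rewrite /is_family /family_img !forall_imset; congr andb.
  by apply: eq_forallb_in => P _; rewrite tpath_img.
apply: eq_forallb_in => P _; rewrite forall_imset; apply: eq_forallb_in => Q _.
rewrite (inj_eq path_img_inj) !lefts_img !rights_img.
by rewrite (disjoint_img inj_f) (disjoint_img inj_g).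
Qed.

Lemma lcover_img F : lcover (family_img F) = f @: lcover F.
Proof.
rewrite /lcover /family_img big_imset; last by move=> ? ? _ _; apply: path_img_inj.
by rewrite (big_morph _ (imsetU f) (imset0 f)); apply: eq_bigr => P _; apply: lefts_img.
Qed.

Lemma rcover_img F : rcover (family_img F) = g @: rcover F.
Proof.
rewrite /rcover /family_img big_imset; last by move=> ? ? _ _; apply: path_img_inj.
by rewrite (big_morph _ (imsetU g) (imset0 g)); apply: eq_bigr => P _; apply: rights_img.
Qed.

Definition family_preimg (F' : {set {set U' * V'}}) : {set {set U * V}} :=
  [set P | path_img P \in F'].

Lemma family_preimgK (F' : {set {set U' * V'}}) :
  lcover F' \subset f @: setT -> rcover F' \subset g @: setT ->
  family_img (family_preimg F') = F'.
Proof.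
move=> /subsetP sL /subsetP sR.
have preimgK (P' : {set U' * V'}) : P' \in F' -> path_img (edge_img @^-1: P') = P'.
  move=> P'F'; apply/setP=> e'; apply/imsetP/idP; first by case=> e; rewrite inE => ? ->.
  move=> e'P'.
  have /sL/imsetP[u _ Eu] : e'.1 \in lcover F'.
    by apply/bigcupP; exists P' => //; apply: mem_lefts.
  have /sR/imsetP[v _ Ev] : e'.2 \in rcover F'.
    by apply/bigcupP; exists P' => //; apply: mem_rights.
  by exists (u, v); rewrite ?inE /edge_img /= -Eu -Ev; case: (e') e'P'.
apply/setP=> P'; apply/imsetP/idP; first by case=> P; rewrite inE => ? ->.
by move=> P'F'; exists (edge_img @^-1: P'); rewrite ?inE preimgK.
Qed.

End Transport.

Lemma card_families_covering (U V : finType) k m (X : {set U}) (Y : {set V}) :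
  #|X| = m -> #|Y| = m ->
  #|[set F : {set {set U * V}} | [&& is_family k F, lcover F == X & rcover F == Y]]|
  = #|[set F : {set {set 'I_m * 'I_m}} | is_covering k F]|.
Proof.
move=> /enum_injection[f [inj_f Ef]] /enum_injection[g [inj_g Eg]].
rewrite -(card_imset _ (family_img_inj inj_f inj_g)); apply: eq_card => F'.
rewrite inE; apply/idP/imsetP.
  case/and3P=> fF' /eqP LX /eqP RY.
  have EF : family_img f g (family_preimg f g F') = F'.
    by apply: family_preimgK; rewrite ?LX ?RY ?Ef ?Eg.
  exists (family_preimg f g F'); last by rewrite EF.
  rewrite inE is_coveringE -(family_imgE k inj_f inj_g) EF fF' /=.
  apply/andP; split; apply/eqP.
    by apply: (imset_inj inj_f); rewrite -(lcover_img inj_f inj_g) EF LX Ef.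
  by apply: (imset_inj inj_g); rewrite -(rcover_img inj_f inj_g) EF RY Eg.
case=> F; rewrite inE is_coveringE => /and3P[fF /eqP LF /eqP RF] ->.
by rewrite family_imgE // lcover_img // rcover_img // LF RF Ef Eg !eqxx fF.
Qed.

Local Open Scope ring_scope.

(* The alternating sum over the subsets of A is 1 if A is empty and 0
   otherwise: toggling a fixed element of A is a sign-reversing involution. *)
Lemma sum_subsets_sign (T : finType) (A : {set T}) :
  \sum_(S : {set T} | S \subset A) (-1) ^+ #|S| = (A == set0)%:R :> int.
Proof.
have [->|[x xA]] := set_0Vmem A.
  by rewrite eqxx (big_pred1 set0) ?cards0 ?expr0 // => S; rewrite /= subset0.
have /negbTE -> : A != set0 by apply/set0Pn; exists x.
pose toggle (S : {set T}) := if x \in S then S :\ x else x |: S.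
have toggleK : involutive toggle.
  move=> S; rewrite /toggle; case: (boolP (x \in S)) => xS.
    by rewrite setD11 setD1K.
  by rewrite setU11 setU1K.
have sign_toggle S : (-1) ^+ #|toggle S| = - (-1) ^+ #|S| :> int.
  rewrite /toggle; case: ifP => xS; last by rewrite cardsU1 xS add1n exprS mulN1r.
  by rewrite (cardsD1 x S) xS add1n exprS mulN1r opprK.
have sub_toggle S : (toggle S \subset A) = (S \subset A).
  rewrite /toggle; case: ifP => xS; last by rewrite subUset sub1set xA.
  by rewrite -{2}(setD1K xS) subUset sub1set xA.
set s := (X in X = _); suff : s = - s.
  by move/eqP; rewrite -subr_eq0 opprK -mulr2n mulrn_eq0 => /eqP.
rewrite {1}/s (reindex_inj (inv_inj toggleK)) /= -sumrN.
by apply: eq_big => S; [apply: sub_toggle | move=> _; apply: sign_toggle].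
Qed.

(* Inclusion-exclusion over the "forbidden" paths, those satisfying hom.  For
   a family S, complement_families S are the families covering exactly the
   vertices not covered by S; adding them to S gives the coverings containing S. *)
Section InclusionExclusion.
Variables (U V : finType) (k : nat) (hom : pred {set U * V}).
Hypothesis k_gt0 : (0 < k)%N.
Implicit Types (P Q : {set U * V}) (S C D : {set {set U * V}}).

Definition complement_families S : {set {set {set U * V}}} :=
  [set D | [&& is_family k D, lcover D == ~: lcover S & rcover D == ~: rcover S]].

Lemma disjoint_complement_cover (T : finType) (phi : {set U * V} -> {set T}) S D P Q :
  \bigcup_(R in D) phi R = ~: (\bigcup_(R in S) phi R) -> P \in S -> Q \in D ->
  [disjoint phi P & phi Q].
Proof.
move=> E PS QD; rewrite -setI_eq0; apply/eqP/setP => u; rewrite !inE.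
apply/negbTE/andP => -[uP uQ].
have : u \in \bigcup_(R in D) phi R by apply/bigcupP; exists Q.
by rewrite E inE; apply/negP/negPn/bigcupP; exists P.
Qed.

Lemma bigcup_setD_complement (T : finType) (phi : {set U * V} -> {set T}) C S :
  S \subset C -> {in C &, forall P Q, P != Q -> [disjoint phi P & phi Q]} ->
  \bigcup_(R in C) phi R = setT ->
  \bigcup_(R in C :\: S) phi R = ~: (\bigcup_(R in S) phi R).
Proof.
move=> SC disjC coverC; apply/setP => u; rewrite inE; apply/bigcupP/idP.
  case=> P /setDP[PC PS] uP; apply/bigcupP => -[Q QS uQ].
  have nPQ : P != Q by apply: contraNneq PS => ->.
  move: (disjC P Q PC (subsetP SC Q QS) nPQ); rewrite -setI_eq0 => /eqP/setP/(_ u).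
  by rewrite !inE uP uQ.
move=> uS; have : u \in [set: T] by [].
rewrite -coverC => /bigcupP[P PC uP]; exists P => //; rewrite inE PC andbT.
by apply: contra uS => PS; apply/bigcupP; exists P.
Qed.

Lemma family_setU_complement S D : is_family k S -> D \in complement_families S ->
  is_family k (S :|: D).
Proof.
move=> /is_familyP[tS dS]; rewrite inE => /and3P[/is_familyP[tD dD] /eqP LD /eqP RD].
have dSD P Q : P \in S -> Q \in D ->
    [disjoint lefts P & lefts Q] /\ [disjoint rights P & rights Q].
  move=> PS QD.
  by split; [apply: (disjoint_complement_cover LD) | apply: (disjoint_complement_cover RD)].
apply/is_familyP; split; first by move=> P /setUP[]; [apply: tS | apply: tD].
move=> P Q /setUP[] PX /setUP[] QX nPQ; [exact: dS | exact: dSD | | exact: dD].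
by case: (dSD Q P QX PX) => ? ?; rewrite disjoint_sym [[disjoint rights _ & _]]disjoint_sym.
Qed.

Lemma complement_families_disjoint S D : D \in complement_families S ->
  [disjoint D & S].
Proof.
rewrite inE => /and3P[fD /eqP LD _]; rewrite -setI_eq0; apply/eqP/setP => P.
rewrite !inE; apply/negbTE/andP => -[PD PS].
have /set0Pn[u uP] := lefts_neq0 k_gt0 ((is_familyP _ _ fD).1 P PD).
have : u \in lcover D by apply/bigcupP; exists P.
by rewrite LD inE; apply/negP/negPn/bigcupP; exists P.
Qed.

(* D |-> S :|: D is a bijection onto the coverings containing S. *)
Lemma card_complement_families S : is_family k S ->
  #|complement_families S| = #|[set C | is_covering k C && (S \subset C)]|.
Proof.
move=> fS.
rewrite -(@card_in_imset _ _ (fun D => S :|: D) (complement_families S)); last first.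
  move=> D1 D2 /complement_families_disjoint/setDidPl E1.
  move=> /complement_families_disjoint/setDidPl E2 /= E.
  by rewrite -E1 -E2 -[D1 :\: S]set0U -[D2 :\: S]set0U -(setDv S) -!setDUl E.
apply: eq_card => C; rewrite [in RHS]inE; apply/imsetP/idP.
  case=> D cD ->; have fSD := family_setU_complement fS cD.
  move: cD; rewrite inE => /and3P[_ /eqP LD /eqP RD].
  rewrite is_coveringE fSD subsetUl /lcover /rcover !bigcup_setU.
  by rewrite -/(lcover D) -/(rcover D) LD RD !setUCr !eqxx.
case/andP; rewrite is_coveringE => /and3P[fC /eqP LC /eqP RC] SC.
exists (C :\: S); last by rewrite setDE setUIr setUCr setIT (setUidPr SC).
have [_ dC] := is_familyP _ _ fC.
rewrite inE (family_sub _ fC) ?subsetDl //= /lcover /rcover.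
rewrite !(@bigcup_setD_complement _ _ C S) ?eqxx // => P Q PC QC nPQ;
  by case: (dC P Q PC QC nPQ).
Qed.

Lemma hom_subfamilyE C S : is_covering k C ->
  [&& is_family k S, [forall P in S, hom P] & S \subset C] =
  (S \subset [set P in C | hom P]).
Proof.
case/and3P=> fC _ _; apply/and3P/subsetP => [[_ /forall_inP homS /subsetP SC] P PS | sub].
  by rewrite inE SC ?homS.
have SC : S \subset C by apply/subsetP => P /sub; rewrite inE => /andP[].
split => //; first exact: family_sub fC.
by apply/forall_inP => P /sub; rewrite inE => /andP[].
Qed.

Lemma sum_sign_hom_subfamilies C : is_covering k C ->
  \sum_(S | [&& is_family k S, [forall P in S, hom P] & S \subset C]) (-1) ^+ #|S|
  = [forall P in C, ~~ hom P]%:R :> int.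
Proof.
move=> cC; rewrite (eq_bigl _ _ (fun S => @hom_subfamilyE C S cC)) sum_subsets_sign.
congr (_%:R); congr nat_of_bool; apply/eqP/forall_inP => [E P PC | noHom].
  by apply/negP => homP; have := in_set0 P; rewrite -E inE PC homP.
by apply/setP => P; rewrite !inE; case: (boolP (P \in C)) => // /noHom /negbTE.
Qed.

Lemma inclusion_exclusion :
  \sum_(S | is_family k S && [forall P in S, hom P])
     (-1) ^+ #|S| * (#|complement_families S|)%:Z
  = (#|[set C | is_covering k C && [forall P in C, ~~ hom P]]|)%:Z.
Proof.
transitivity (\sum_(S | is_family k S && [forall P in S, hom P])
                \sum_(C | is_covering k C && (S \subset C)) ((-1) ^+ #|S| : int)).
  apply: eq_bigr => S /andP[fS _]; rewrite card_complement_families //.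
  by rewrite -sum1dep_card -natz natr_sum mulr_sumr; apply: eq_bigr => C _; rewrite mulr1.
rewrite (exchange_big_dep (is_covering k)) /=; last by move=> S C _ /andP[].
transitivity (\sum_(C | is_covering k C) ([forall P in C, ~~ hom P]%:R : int)).
  apply: eq_bigr => C cC; rewrite -sum_sign_hom_subfamilies //.
  by apply: eq_bigl => S; rewrite cC /= -andbA.
by rewrite -sum1dep_card -natz natr_sum [RHS]big_mkcondr; apply: eq_bigr => C _; case: ifP.
Qed.

Lemma card_complement_families_mu S : #|U| = #|V| -> is_family k S ->
  #|complement_families S| =
  #|[set F : {set {set 'I_(#|U| - k * #|S|) * 'I_(#|U| - k * #|S|)}} | is_covering k F]|.
Proof.
move=> card_UV fS; apply: card_families_covering.
  by rewrite cardsCs setCK (card_lcover k_gt0 fS).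
by rewrite cardsCs setCK (card_rcover k_gt0 fS) card_UV.
Qed.

End InclusionExclusion.

Lemma LL_widen t (p : {poly int}) d : (size p <= d)%N ->
  LL t p = \sum_(i < d) p`_i * (mu t i)%:Z.
Proof.
move=> size_p; rewrite /LL (big_ord_widen d (fun i => p`_i * (mu t i)%:Z)) //.
rewrite big_mkcond /=; apply: eq_bigr => i _; case: ltnP => // le_p_i.
by rewrite nth_default // mul0r.
Qed.

Lemma LL_monomials t (I : finType) (A : {pred I}) (c : I -> int) (m : I -> nat) :
  LL t (\sum_(x in A) c x *: 'X^(m x)) = \sum_(x in A) c x * (mu t (m x))%:Z.
Proof.
set d := (\sum_(x in A) m x).+1.
have m_lt_d x : x \in A -> (m x < d)%N by move=> xA; rewrite ltnS (bigD1 x) //= leq_addr.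
rewrite (@LL_widen _ _ d); last first.
  apply/leq_sizeP => i le_d_i; rewrite coef_sum big1 // => x xA.
  rewrite coefZ coefXn (_ : (i == m x) = false) ?mulr0 //.
  by apply/negbTE; rewrite neq_ltn (leq_trans (m_lt_d x xA) le_d_i) orbT.
under eq_bigr => i _ do rewrite coef_sum mulr_suml.
rewrite exchange_big /=; apply: eq_bigr => x xA.
rewrite (bigD1 (Ordinal (m_lt_d x xA))) //= coefZ coefXn eqxx mulr1 big1 ?addr0 //.
move=> i ne_i_mx; rewrite coefZ coefXn (_ : (i == m x :> nat) = false) ?mulr0 ?mul0r //.
by apply: contraNF ne_i_mx => /eqP E; apply/eqP/val_inj.
Qed.

(* The disjoint union of the blocks K_{n_i,n_i}: each polynomial L_{n_i} is
   the generating function of the families of paths inside block i, and a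
   family of homogeneous paths splits uniquely into such block families. *)
Section Blocks.
Variables (t j : nat) (n : 'I_j -> nat).
Hypothesis k_gt0 : (0 < kt t)%N.
Local Notation W := (DU n).
Implicit Types (P : {set W * W}) (F S : {set {set W * W}})
  (f : {ffun 'I_j -> {set {set W * W}}}).

Definition inblock (i : 'I_j) P : bool :=
  [forall u in lefts P, tag u == i] && [forall v in rights P, tag v == i].
Definition homogeneous P : bool := [exists i, inblock i P].

Definition emb (i : 'I_j) (x : 'I_(n i)) : W := Tagged (fun i => 'I_(n i)) x.
Arguments emb i x : clear implicits.

Lemma emb_inj i : injective (emb i).
Proof. by move=> x y /eqP; rewrite eq_Tagged /= => /eqP. Qed.

Lemma mem_emb_range i u : (u \in emb i @: setT) = (tag u == i).
Proof.
apply/imsetP/eqP => [[x _ ->] // | E].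
by case: u E => i' x /= E; subst i'; exists x.
Qed.

Lemma inblockE i P : inblock i P =
  (lefts P \subset emb i @: setT) && (rights P \subset emb i @: setT).
Proof.
congr andb; apply/forall_inP/subsetP => H u uP;
  by rewrite ?mem_emb_range ?(H u uP) // -mem_emb_range H.
Qed.

Lemma inblock_uniq P i i' : is_tpath (kt t) P -> inblock i P -> inblock i' P -> i = i'.
Proof.
move=> tP /andP[/forall_inP Li _] /andP[/forall_inP Li' _].
have /set0Pn[u uP] := lefts_neq0 k_gt0 tP.
by move: (Li u uP) (Li' u uP) => /eqP <- /eqP.
Qed.

Definition block_families (i : 'I_j) : {set {set {set W * W}}} :=
  [set F | is_family (kt t) F && [forall P in F, inblock i P]].

Lemma block_families_img i :
  block_families i = family_img (emb i) (emb i) @: [set F | is_family (kt t) F].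
Proof.
have inj_e := @emb_inj i.
apply/setP => F'; rewrite inE; apply/andP/imsetP.
  case=> fF' /forall_inP bF'.
  have sL : lcover F' \subset emb i @: setT.
    apply/subsetP => u /bigcupP[P PF uP].
    by move: (bF' P PF); rewrite inblockE => /andP[/subsetP-> //].
  have sR : rcover F' \subset emb i @: setT.
    apply/subsetP => u /bigcupP[P PF uP].
    by move: (bF' P PF); rewrite inblockE => /andP[_ /subsetP->].
  exists (family_preimg (emb i) (emb i) F'); last by rewrite family_preimgK.
  by rewrite inE -(family_imgE (kt t) inj_e inj_e) family_preimgK.
case=> F; rewrite inE => fF ->; split; first by rewrite family_imgE.
rewrite /family_img forall_imset; apply/forall_inP => P _.
by rewrite inblockE lefts_img // rights_img // !imsetS ?subsetT.
Qed.

Lemma Lpoly_block i :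
  Lpoly t (n i) = \sum_(F in block_families i) (-1) ^+ #|F| *: 'X^(n i - kt t * #|F|).
Proof.
have inj_e := @emb_inj i.
rewrite block_families_img big_imset /=; last by move=> ? ? _ _; apply: family_img_inj.
apply: eq_big => [F | F _]; first by rewrite inE.
by rewrite card_imset //; apply: path_img_inj.
Qed.

Lemma card_block_family i F : F \in block_families i -> (kt t * #|F| <= n i)%N.
Proof.
rewrite inE => /andP[fF /forall_inP bF]; rewrite -card_lcover //.
rewrite -(card_ord (n i)) -cardsT -(card_imset _ (@emb_inj i)).
apply: subset_leq_card; apply/subsetP => u /bigcupP[P PF uP].
by move: (bF P PF); rewrite inblockE => /andP[/subsetP-> //].
Qed.

Lemma card_DU : #|W| = \sum_(i < j) n i.
Proof.
by rewrite card_tagged sumnE big_map big_enum /=; apply: eq_bigr => i _; rewrite card_ord.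
Qed.

Definition glue f : {set {set W * W}} := \bigcup_i f i.

Lemma block_choice_disjoint f : f \in family block_families ->
  forall i i', i != i' -> [disjoint f i & f i'].
Proof.
move=> /familyP fB i i' ne_ii'; rewrite -setI_eq0; apply/eqP/setP => P.
rewrite !inE; apply/negbTE/andP => -[Pi Pi'].
move: (fB i) (fB i'); rewrite !inE => /andP[/is_familyP[tF _] /forall_inP bF].
move=> /andP[_ /forall_inP bF'].
by move/eqP: ne_ii'; apply; apply: (inblock_uniq (tF P Pi) (bF P Pi) (bF' P Pi')).
Qed.

Lemma card_glue f : f \in family block_families -> #|glue f| = \sum_i #|f i|.
Proof. by move/block_choice_disjoint; apply: card_bigcup_disjoint. Qed.

Lemma glue_family f : f \in family block_families ->
  is_family (kt t) (glue f) && [forall P in glue f, homogeneous P].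
Proof.
move=> /familyP fB; have inb i : {in f i, forall P, inblock i P}.
  by move=> P; move: (fB i); rewrite inE => /andP[_ /forall_inP]; apply.
apply/andP; split; last first.
  by apply/forall_inP => P /bigcupP[i _ Pi]; apply/existsP; exists i; apply: inb.
have fam i : is_family (kt t) (f i) by move: (fB i); rewrite inE => /andP[].
apply/is_familyP; split.
  by move=> P /bigcupP[i _ Pi]; case/is_familyP: (fam i) => tF _; apply: tF.
move=> P Q /bigcupP[i _ Pi] /bigcupP[i' _ Qi'] nPQ.
have [eq_ii' | ne_ii'] := eqVneq i i'.
  by move: Qi'; rewrite -eq_ii' => Qi; case/is_familyP: (fam i) => _; apply.
move: (inb i P Pi) (inb i' Q Qi') => /andP[/forall_inP LP /forall_inP RP].
move=> /andP[/forall_inP LQ /forall_inP RQ].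
split; rewrite -setI_eq0; apply/eqP/setP => u; rewrite !inE;
  apply/negbTE/andP => -[uP uQ]; move/eqP: ne_ii'; apply.
  by move: (LP u uP) (LQ u uQ) => /eqP <- /eqP.
by move: (RP u uP) (RQ u uQ) => /eqP <- /eqP.
Qed.

Lemma hom_families_glue :
  [set S | is_family (kt t) S && [forall P in S, homogeneous P]]
  = glue @: family block_families.
Proof.
apply/setP => S; rewrite inE; apply/idP/imsetP; last by case=> f /glue_family fS ->.
case/andP=> fS /forall_inP homS.
exists [ffun i => [set P in S | inblock i P]].
  apply/familyP => i; rewrite ffunE inE (family_sub _ fS) /=.
    by apply/forall_inP => P; rewrite inE => /andP[].
  by apply/subsetP => P; rewrite inE => /andP[].
apply/setP => P; apply/idP/bigcupP => [PS | [i _]]; last by rewrite ffunE inE => /andP[].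
by case/existsP: (homS P PS) => i Pi; exists i; rewrite ?ffunE ?inE ?PS.
Qed.

Lemma glue_inj : {in family block_families &, injective glue}.
Proof.
suff glueK f : f \in family block_families ->
    forall i, f i = [set P in glue f | inblock i P].
  by move=> f g ff fg E; apply/ffunP => i; rewrite (glueK f) // (glueK g) // E.
move=> ff i; have /familyP fB := ff; apply/setP => P; rewrite inE.
apply/idP/andP => [Pi | [/bigcupP[i' _ Pi'] Pinb]].
  split; first by apply/bigcupP; exists i.
  by move: (fB i); rewrite inE => /andP[_ /forall_inP]; apply.
move: (fB i'); rewrite inE => /andP[/is_familyP[tF _] /forall_inP bF].
by rewrite (inblock_uniq (tF P Pi') Pinb (bF P Pi')).
Qed.

Lemma prod_Lpoly_expand :
  \prod_(i < j) Lpoly t (n i) =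
  \sum_(S | is_family (kt t) S && [forall P in S, homogeneous P])
     (-1) ^+ #|S| *: 'X^(#|W| - kt t * #|S|).
Proof.
under eq_bigr => i _ do rewrite Lpoly_block.
rewrite bigA_distr_big_dep.
rewrite (eq_bigl (fun S => S \in glue @: family block_families)); last first.
  by move=> S; rewrite -hom_families_glue inE.
rewrite big_imset /=; last exact: glue_inj.
apply: eq_big => [f | f ff]; first exact/familyP/familyP.
rewrite scaler_prod !prodrXr card_glue //.
congr (_ *: 'X^_); rewrite card_DU big_distrr /= sumnB // => i _.
by apply: card_block_family; move/familyP: ff.
Qed.

End Blocks.

Theorem mainTheorem16 (t j : nat) (n : 'I_j -> nat) :
  odd t ->
  LL t (\prod_(i < j) Lpoly t (n i)) =
  (#|[set F : {set {set DU n * DU n}} |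
        is_covering (kt t) F && [forall P in F, inhom P]]|)%:Z.
Proof.
move=> odd_t; have k_gt0 : (0 < kt t)%N by rewrite /kt half_gt0 ltnS odd_gt0.
rewrite prod_Lpoly_expand // LL_monomials.
(* inhom P is by definition ~~ homogeneous P. *)
rewrite -(inclusion_exclusion (@homogeneous j n) k_gt0).
apply: eq_bigr => S /andP[fS _]; congr (_ * Posz _).
by rewrite card_complement_families_mu.
Qed.
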